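(* Let $N\in\mathbb{N}$ with $N\ge3$ and $n\in\mathbb{N}$ with $n\ge n_N$. Then there is a real $E$ with $|E|\le\frac{2\cdot10^{-2}}{24^{N/2}}n^{-\frac{N+2}{2}}$ such that \[ e^{\frac{\pi\sqrt{24n+1}}{3\sqrt2}}=e^{2\pi\sqrt{\frac n3}}\left(\sum_{m=0}^{N+1}\frac{b(m)}{n^{\frac m2}}+E\right). \]
   Context: $n_N:=\left(\frac{3(3N+4)\log(6N+8)}{1.3^2}\right)^4$. For $m\in\mathbb{N}_0$: $e_1(0):=1$, $e_1(m):=\frac{(2m-1)!}{(-96)^m}\sum_{\nu=1}^{m}\frac{(-\pi^2/18)^\nu}{(2\nu-1)!(\nu+m)!(m-\nu)!}$ for $m\ge1$; $o_1(m):=\frac{\pi(2m)!}{24\sqrt3(-96)^m}\sum_{\nu=0}^{m}\frac{(-\pi^2/18)^\nu}{(2\nu)!(m-\nu)!(\nu+m+1)!}$; and $b(2m):=e_1(m)$, $b(2m+1):=o_1(m)$. *)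

From Stdlib Require Import Reals Lra Lia Factorial.
Open Scope R_scope.

Definition nN (N : nat) : R :=
  (3 * (3 * INR N + 4) * ln (6 * INR N + 8) / (13/10) ^ 2) ^ 4.

(* finite sum over nu = a .. b (inclusive); empty if b < a *)
Definition sum_range (a b : nat) (f : nat -> R) : R :=
  sum_f_R0 (fun k => f (a + k)%nat) (b - a) * (if Nat.leb a b then 1 else 0).

Definition e1 (m : nat) : R :=
  match m with
  | O => 1
  | S _ =>
    INR (fact (2 * m - 1)) / (-96) ^ m *
    sum_range 1 m (fun nu =>
      (- PI ^ 2 / 18) ^ nu /
      (INR (fact (2 * nu - 1)) * INR (fact (nu + m)) * INR (fact (m - nu))))
  end.

Definition o1 (m : nat) : R :=
  PI * INR (fact (2 * m)) / (24 * sqrt 3 * (-96) ^ m) *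
  sum_range 0 m (fun nu =>
    (- PI ^ 2 / 18) ^ nu /
    (INR (fact (2 * nu)) * INR (fact (m - nu)) * INR (fact (nu + m + 1)))).

Definition b (k : nat) : R :=
  if Nat.even k then e1 (Nat.div2 k) else o1 (Nat.div2 k).

(** With [y = 24 n], [u = 1 / sqrt y] and [t = sqrt (y + 1) - sqrt y], the two exponents differ
    by [kappa * t] with [kappa = PI / (3 sqrt 2)], so the claim bounds the truncation error of
    [exp (kappa t)] expanded in powers of [u].  The number [t] is the root of
    [u t^2 + 2 t - u = 0] in [[0, 1]], i.e. [t = (sqrt (1 + u^2) - 1) / u], and its powers have
    explicit expansions [t^k = sum_n tcoef n k u^n] with ballot-number coefficients satisfying
    [|tcoef n k| <= k / n]; this is proved by checking that both sides obey the same three-term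
    recurrence in [k], which has no nonzero bounded solution.  Expanding
    [exp (kappa t) = sum_k kappa^k t^k / k!] and collecting powers of [u] gives coefficients
    [acoef kappa m = b m * sqrt 24 ^ m].  Truncating at order [M = N + 1] costs at most
    [kappa e^kappa u^(M+1) / ((M + 1) (1 - u))] from the expansions of the [t^k] plus the Taylor
    tail of [exp], and both together stay below [0.48 u^(M+1)] once [u <= 1/10]. *)

From Stdlib Require Import Reals Lra Lia Factorial Bool.
From Coquelicot Require Import Coquelicot.
Open Scope R_scope.

Lemma sum_f_R0_ge_term (f : nat -> R) n i :
  (forall j, 0 <= f j) -> (i <= n)%nat -> f i <= sum_f_R0 f n.
Proof.
  intros Hf Hi. induction n as [|n IH]; simpl.
  - replace i with 0%nat by lia. lra.
  - pose proof (Hf (S n)). destruct (Nat.eq_dec i (S n)) as [->|Hne].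
    + pose proof (cond_pos_sum f n Hf). lra.
    + pose proof (IH ltac:(lia)). lra.
Qed.

Lemma sum_f_R0_even (f : nat -> R) j : (forall i, f (2*i + 1)%nat = 0) ->
  sum_f_R0 f (2*j) = sum_f_R0 (fun i => f (2*i)%nat) j.
Proof.
  intro H. induction j as [|j IH]; [reflexivity|].
  replace (2 * S j)%nat with (S (S (2*j))) by lia. rewrite !tech5, IH.
  replace (S (2*j)) with (2*j + 1)%nat by lia. rewrite H.
  replace (S (2*j + 1)) with (2 * S j)%nat by lia. ring.
Qed.

Lemma sum_f_R0_odd (f : nat -> R) j : (forall i, f (2*i)%nat = 0) ->
  sum_f_R0 f (2*j + 1) = sum_f_R0 (fun i => f (2*i + 1)%nat) j.
Proof.
  intro H. replace (2*j + 1)%nat with (S (2*j)) by lia.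
  rewrite decomp_sum, Nat.pred_succ by lia.
  replace (f 0%nat) with 0 by (symmetry; exact (H 0%nat)). rewrite Rplus_0_l.
  rewrite (sum_f_R0_even (fun n => f (S n)))
    by (intro i; replace (S (2*i + 1)) with (2 * S i)%nat by lia; apply H).
  apply sum_eq. intros i _. f_equal. lia.
Qed.

Lemma sum_f_R0_div (f : nat -> R) n x : sum_f_R0 f n / x = sum_f_R0 (fun i => f i / x) n.
Proof. unfold Rdiv. rewrite Rmult_comm, scal_sum. apply sum_eq. intros. ring. Qed.

Lemma sum_f_R0_swap (F : nat -> nat -> R) n1 n2 :
  sum_f_R0 (fun m => sum_f_R0 (F m) n2) n1 = sum_f_R0 (fun k => sum_f_R0 (fun m => F m k) n1) n2.
Proof.
  induction n1 as [|n1 IH]; [reflexivity|].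
  rewrite tech5, IH, <- sum_plus. apply sum_eq. intros. rewrite tech5. reflexivity.
Qed.

Lemma sum_f_R0_extend_zero (f : nat -> R) m d : (forall k, (m < k)%nat -> f k = 0) ->
  sum_f_R0 f (m + d) = sum_f_R0 f m.
Proof.
  intro H. induction d as [|d IH]; [now rewrite Nat.add_0_r|].
  rewrite Nat.add_succ_r, tech5, IH, H by lia. ring.
Qed.

Lemma pow_m1_cases n : (-1)^n = 1 \/ (-1)^n = -1.
Proof. induction n as [|n [H|H]]; simpl; [left | right | left]; rewrite ?H; lra. Qed.

Lemma binomial_le_pow2 n i : (i <= n)%nat -> Binomial.C n i <= 2^n.
Proof.
  intro Hi. replace 2 with (1 + 1) by lra. rewrite binomial.
  eapply Rle_trans; [|apply (sum_f_R0_ge_term _ n i); [|exact Hi]].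
  - simpl. rewrite !pow1. lra.
  - intro j. rewrite !pow1, !Rmult_1_r. unfold Binomial.C, Rdiv.
    apply Rmult_le_pos; [apply pos_INR|].
    apply Rlt_le, Rinv_0_lt_compat, Rmult_lt_0_compat; apply INR_fact_lt_0.
Qed.

Lemma recurrence_bounded_zero (u B : R) (d : nat -> R) :
  0 < u <= 1 -> (forall k, u * d (k + 2)%nat = u * d k - 2 * d (k + 1)%nat) ->
  d 0%nat = 0 -> (forall k, Rabs (d k) <= B) -> forall k, d k = 0.
Proof.
  intros Hu Hrec H0 HB.
  (* The recurrence makes [|d|] midpoint convex, so [|d k| >= k |d 1|]. *)
  assert (Hconvex : forall k, 2 * Rabs (d (S k)) <= Rabs (d k) + Rabs (d (S (S k)))).
  { intro k. pose proof (Hrec k) as E. replace (k + 2)%nat with (S (S k)) in E by lia.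
    replace (k + 1)%nat with (S k) in E by lia.
    assert (E' : 2 * d (S k) = u * (d k - d (S (S k)))) by (rewrite Rmult_minus_distr_l; lra).
    replace (2 * Rabs (d (S k))) with (Rabs (2 * d (S k))) by (rewrite Rabs_mult, Rabs_right; lra).
    rewrite E', Rabs_mult, (Rabs_right u) by lra.
    assert (Rabs (d k - d (S (S k))) <= Rabs (d k) + Rabs (d (S (S k)))) by
      (unfold Rminus; rewrite <- (Rabs_Ropp (d (S (S k)))); apply Rabs_triang).
    pose proof (Rabs_pos (d k - d (S (S k)))). nra. }
  assert (Hstep : forall k, Rabs (d 1%nat) <= Rabs (d (S k)) - Rabs (d k)).
  { induction k as [|k IH]; [rewrite H0, Rabs_R0; lra|]. pose proof (Hconvex k). lra. }
  assert (Hlin : forall k, INR k * Rabs (d 1%nat) <= Rabs (d k)).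
  { induction k as [|k IH]; [rewrite H0, Rabs_R0; simpl; lra|].
    rewrite S_INR. pose proof (Hstep k). lra. }
  assert (H1 : d 1%nat = 0).
  { destruct (Req_dec (d 1%nat) 0) as [|Hne]; [assumption|].
    pose proof (Rabs_pos_lt _ Hne) as Hpos.
    destruct (INR_unbounded (B / Rabs (d 1%nat))) as [k Hk].
    pose proof (Hlin k). pose proof (HB k).
    apply Rlt_gt, (Rmult_lt_compat_r (Rabs (d 1%nat))) in Hk; [|exact Hpos].
    unfold Rdiv in Hk. rewrite Rmult_assoc, Rinv_l in Hk by lra. lra. }
  assert (Hpair : forall k, d k = 0 /\ d (S k) = 0).
  { induction k as [|k [IH1 IH2]]; [split; assumption|]. split; [assumption|].
    pose proof (Hrec k) as E. replace (k + 2)%nat with (S (S k)) in E by lia.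
    replace (k + 1)%nat with (S k) in E by lia. rewrite IH1, IH2 in E.
    apply (Rmult_eq_reg_l u); lra. }
  intro k. apply Hpair.
Qed.

Lemma Rpower_half y m : 0 < y -> Rpower y (INR m / 2) = sqrt y ^ m.
Proof.
  intro Hy. replace (INR m / 2) with (/ 2 * INR m) by field.
  rewrite <- Rpower_mult, Rpower_sqrt by exact Hy. apply Rpower_pow, sqrt_lt_R0, Hy.
Qed.

Lemma sqrt2_ge : 1414/1000 <= sqrt 2.
Proof. rewrite <- (sqrt_square (1414/1000)) by lra. apply sqrt_le_1_alt. lra. Qed.

Lemma PI_le_315 : PI <= 315/100.
Proof.
  destruct (PI_2_3_7_ineq 1) as [_ H].
  unfold tg_alt, PI_2_3_7_tg, Ratan_seq in H. cbn -[Rdiv Rmult Rplus Rinv] in H. lra.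
Qed.

(** * The exponential series *)

Lemma is_series_exp x : is_series (fun k => x^k / INR (fact k)) (exp x).
Proof.
  eapply is_series_ext; [|apply (is_exp_Reals x)]. intro k.
  change (scal (pow_n x k) (/ INR (fact k))) with (pow_n x k * / INR (fact k)).
  rewrite pow_n_pow. reflexivity.
Qed.

Lemma exp_sub_partial_sum x M : exp x - sum_f_R0 (fun k => x^k / INR (fact k)) M =
  Series (fun j => x^(S M + j) / INR (fact (S M + j))).
Proof.
  rewrite <- (is_series_unique _ _ (is_series_exp x)).
  rewrite (Series_incr_n _ (S M)) by (lia || eexists; apply is_series_exp).
  simpl pred. ring.
Qed.

Lemma exp_term_nonneg x k : 0 <= x -> 0 <= x^k / INR (fact k).
Proof. intro Hx. apply Rdiv_le_0_compat; [apply pow_le, Hx | apply INR_fact_lt_0]. Qed.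

Lemma exp_partial_sum_le x M : 0 <= x -> sum_f_R0 (fun k => x^k / INR (fact k)) M <= exp x.
Proof.
  intro Hx. enough (0 <= exp x - sum_f_R0 (fun k => x^k / INR (fact k)) M) by lra.
  rewrite exp_sub_partial_sum.
  replace 0 with (Series (fun _ => 0 * 0)) by (rewrite Series_scal_l; ring).
  apply Series_le; [intro j; rewrite Rmult_0_l; split; [lra | apply exp_term_nonneg, Hx]|].
  apply (ex_series_incr_n (fun k => x^k / INR (fact k)) (S M)). eexists. apply is_series_exp.
Qed.

Lemma exp_sub_partial_sum_le x M : 0 <= x < 1 ->
  exp x - sum_f_R0 (fun k => x^k / INR (fact k)) M <= x^(S M) / (1 - x).
Proof.
  intro Hx. assert (Hg : Rabs x < 1) by (rewrite Rabs_right; lra).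
  rewrite exp_sub_partial_sum.
  eapply Rle_trans; [apply (Series_le _ (fun j => x^(S M) * x^j))|].
  - intro j. split; [apply exp_term_nonneg; lra|]. rewrite <- pow_add.
    apply (Rle_div_l _ _ _ (INR_fact_lt_0 _)).
    rewrite <- (Rmult_1_r (x^(S M + j))) at 1.
    apply Rmult_le_compat_l; [apply pow_le; lra|].
    apply (le_INR 1), lt_O_fact.
  - exact (ex_series_scal_l _ _ (ex_series_geom x Hg)).
  - rewrite Series_scal_l, Series_geom by exact Hg. unfold Rdiv. lra.
Qed.

Lemma sum_index_exp_le c M : 0 <= c ->
  sum_f_R0 (fun k => c^k / INR (fact k) * INR k) M <= c * exp c.
Proof.
  intro Hc. pose proof (exp_pos c).
  destruct M as [|M]; [simpl; rewrite Rmult_0_r; nra|].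
  rewrite decomp_sum by lia. simpl pred.
  rewrite (sum_eq _ (fun k => c^k / INR (fact k) * c)).
  - rewrite <- scal_sum. simpl. rewrite Rmult_0_r, Rplus_0_l.
    apply Rmult_le_compat_l; [exact Hc | apply exp_partial_sum_le, Hc].
  - intros k _. rewrite fact_simpl, mult_INR. simpl pow.
    pose proof (INR_fact_neq_0 k). assert (INR (S k) <> 0) by (apply not_0_INR; lia).
    field. tauto.
Qed.

Lemma exp_le_23_10 c : c <= 3/4 -> exp c <= 23/10.
Proof.
  intro Hc. assert (H4 : exp (c + c + c + c) <= exp (1 + 1 + 1)).
  { destruct (Req_dec (c + c + c + c) (1 + 1 + 1)) as [->|Hne]; [lra|].
    left. apply exp_increasing. lra. }
  rewrite !exp_plus in H4. pose proof exp_le_3. pose proof (exp_pos 1). pose proof (exp_pos c).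
  assert (exp 1 * exp 1 * exp 1 <= 27) by (assert (exp 1 * exp 1 <= 9) by nra; nra).
  destruct (Rle_lt_dec (exp c) (23/10)) as [|Hgt]; [assumption|].
  assert (exp c * exp c > 529/100) by nra. nra.
Qed.

(** * The coefficients of the powers of [t(u)] *)

(* [hcoef k i] and [tcoef n k] are the coefficients of [u^(k + 2 i)] and [u^n] in [t(u)^k], where
   [t(u) = (sqrt (1 + u^2) - 1) / u]. *)
Definition hcoef (k i : nat) : R :=
  match k with
  | O => if (i =? 0)%nat then 1 else 0
  | S k' => (-1)^i * INR k * INR (fact (k' + 2*i)) /
            (2^(k + 2*i) * INR (fact i) * INR (fact (k + i)))
  end.

Definition tcoef (n k : nat) : R :=
  if (k <=? n)%nat && Nat.even (n - k) then hcoef k (Nat.div2 (n - k)) else 0.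

Lemma hcoef_S k i a p : a = (k + 2*i)%nat -> p = (k + i)%nat ->
  hcoef (S k) i = (-1)^i * INR (S k) * INR (fact a) / (2^(S a) * INR (fact i) * INR (fact (S p))).
Proof. now intros -> ->. Qed.

Lemma hcoef_r0 k : hcoef k 0 = / 2^k.
Proof.
  destruct k as [|k]; [simpl; field|].
  rewrite (hcoef_S k 0 k k) by lia.
  rewrite fact_simpl, mult_INR. simpl (fact 0); simpl (_ ^ 0); simpl (INR 1).
  field. split; [apply pow_nonzero; lra | split; [apply INR_fact_neq_0 | apply not_0_INR; lia]].
Qed.

Lemma hcoef_rec k i : hcoef (k + 2) i = hcoef k (S i) - 2 * hcoef (k + 1) (S i).
Proof.
  pose proof (INR_fact_neq_0 i). pose proof (pos_INR i).
  destruct k as [|k].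
  - set (a := (2*i)%nat).
    assert (Ha : INR a = 2 * INR i) by (unfold a; rewrite mult_INR; reflexivity).
    pose proof (INR_fact_neq_0 a). pose proof (pow_nonzero 2 a ltac:(lra)).
    replace (0 + 2)%nat with (S 1) by lia. replace (0 + 1)%nat with 1%nat by lia.
    rewrite (hcoef_S 1 i (S a) (S i)), (hcoef_S 0 (S i) (S (S a)) (S i)) by (unfold a; lia).
    simpl hcoef. rewrite !fact_simpl, !mult_INR, !S_INR, Ha, INR_0. simpl pow.
    field. lra.
  - set (a := (k + 2*i)%nat). set (p := (k + i)%nat).
    assert (Ha : INR a = INR k + 2 * INR i) by (unfold a; rewrite plus_INR, mult_INR; reflexivity).
    assert (Hp : INR p = INR k + INR i) by (unfold p; apply plus_INR).
    pose proof (INR_fact_neq_0 a). pose proof (INR_fact_neq_0 p).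
    pose proof (pow_nonzero 2 a ltac:(lra)). pose proof (pos_INR k).
    replace (S k + 2)%nat with (S (S (S k))) by lia. replace (S k + 1)%nat with (S (S k)) by lia.
    rewrite (hcoef_S (S (S k)) i (S (S a)) (S (S p))), (hcoef_S k (S i) (S (S a)) (S p)),
      (hcoef_S (S k) (S i) (S (S (S a))) (S (S p))) by (unfold a, p; lia).
    rewrite !fact_simpl, !mult_INR, !S_INR, Ha, Hp. simpl pow.
    field. lra.
Qed.

Lemma tcoef_shift k i : tcoef (k + 2*i) k = hcoef k i.
Proof.
  unfold tcoef. replace (k + 2*i - k)%nat with (2*i)%nat by lia.
  rewrite Nat.even_even, Nat.div2_double, (proj2 (Nat.leb_le k (k + 2*i))) by lia.
  reflexivity.
Qed.

Lemma tcoef_lt n k : (n < k)%nat -> tcoef n k = 0.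
Proof. intro H. unfold tcoef. now rewrite (proj2 (Nat.leb_gt k n)). Qed.

Lemma tcoef_parity n k : Nat.even n <> Nat.even k -> tcoef n k = 0.
Proof.
  intro H. unfold tcoef. destruct (Nat.leb_spec k n) as [Hkn|]; [|reflexivity].
  replace n with (k + (n - k))%nat in H at 1 by lia. rewrite Nat.even_add in H.
  destruct (Nat.even (n - k)), (Nat.even k); simpl in *; congruence.
Qed.

Lemma tcoef_00 : tcoef 0 0 = 1.
Proof. reflexivity. Qed.

Lemma tcoef_S0 n : tcoef (S n) 0 = 0.
Proof. destruct n; [reflexivity|]. unfold tcoef. simpl. now destruct (Nat.even n). Qed.

Lemma tcoef_rec n k : tcoef n (k + 2) = tcoef n k - 2 * tcoef (S n) (k + 1).
Proof.
  destruct (Nat.lt_ge_cases n k) as [Hlt|Hge].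
  { rewrite !tcoef_lt by lia. ring. }
  destruct (Nat.Even_or_Odd (n - k)) as [[i Hi]|[i Hi]].
  - replace n with (k + 2*i)%nat by lia.
    replace (S (k + 2*i)) with (k + 1 + 2*i)%nat by lia. rewrite !tcoef_shift.
    destruct i as [|i].
    + rewrite tcoef_lt by lia. rewrite !hcoef_r0, pow_add. simpl pow.
      field. apply pow_nonzero. lra.
    + replace (k + 2 * S i)%nat with (k + 2 + 2*i)%nat by lia. rewrite tcoef_shift. apply hcoef_rec.
  - replace n with (k + (2*i + 1))%nat by lia.
    replace (S (k + (2*i + 1))) with (k + 1 + (2*i + 1))%nat by lia.
    rewrite !tcoef_parity; [ring | ..]; rewrite !Nat.even_add, ?Nat.even_even;
      destruct (Nat.even k); cbn; congruence.
Qed.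

Lemma hcoef_binomial k i : hcoef (S k) i =
  (-1)^i * (INR (S k) / INR (S k + 2*i)) * (Binomial.C (S k + 2*i) i / 2^(S k + 2*i)).
Proof.
  rewrite (hcoef_S k i (k + 2*i) (k + i)) by lia.
  unfold Binomial.C. replace (S k + 2*i - i)%nat with (S (k + i)) by lia.
  replace (S k + 2*i)%nat with (S (k + 2*i)) by lia.
  rewrite (fact_simpl (k + 2*i)), mult_INR.
  pose proof (INR_fact_neq_0 (k + 2*i)). pose proof (INR_fact_neq_0 i).
  pose proof (INR_fact_neq_0 (S (k + i))). pose proof (pow_nonzero 2 (S (k + 2*i)) ltac:(lra)).
  assert (INR (S (k + 2*i)) <> 0) by (apply not_0_INR; lia).
  field. tauto.
Qed.

Lemma hcoef_abs_le k i : (1 <= k)%nat -> Rabs (hcoef k i) <= INR k / INR (k + 2*i).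
Proof.
  intro Hk. destruct k as [|k]; [lia|].
  rewrite hcoef_binomial, !Rabs_mult, pow_1_abs, Rmult_1_l.
  assert (Hn : 0 < INR (S k + 2*i)) by (apply lt_0_INR; lia).
  assert (Hp : 0 < 2^(S k + 2*i)) by (apply pow_lt; lra).
  assert (HC : 0 <= Binomial.C (S k + 2*i) i / 2^(S k + 2*i) <= 1).
  { split.
    - apply Rmult_le_pos; [|apply Rlt_le, Rinv_0_lt_compat; lra].
      unfold Binomial.C, Rdiv. apply Rmult_le_pos; [apply pos_INR|].
      apply Rlt_le, Rinv_0_lt_compat, Rmult_lt_0_compat; apply INR_fact_lt_0.
    - apply (Rdiv_le_1 _ _ Hp), binomial_le_pow2. lia. }
  assert (Hq : 0 <= INR (S k) / INR (S k + 2*i)) by (apply Rdiv_le_0_compat; [apply pos_INR|lra]).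
  rewrite !Rabs_right by lra. nra.
Qed.

Lemma tcoef_abs_le n k : (1 <= n)%nat -> Rabs (tcoef n k) <= INR k / INR n.
Proof.
  intro Hn.
  assert (Hpos : 0 <= INR k / INR n)
    by (apply Rdiv_le_0_compat; [apply pos_INR | apply lt_0_INR; lia]).
  destruct (Nat.lt_ge_cases n k) as [Hlt|Hge].
  { rewrite tcoef_lt, Rabs_R0 by lia. exact Hpos. }
  destruct k as [|k].
  { destruct n as [|n]; [lia|]. rewrite tcoef_S0, Rabs_R0. exact Hpos. }
  destruct (Nat.Even_or_Odd (n - S k)) as [[i Hi]|[i Hi]].
  - replace n with (S k + 2*i)%nat by lia. rewrite tcoef_shift. apply hcoef_abs_le. lia.
  - rewrite tcoef_parity, Rabs_R0 by (replace n with (S k + (2*i + 1))%nat by lia;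
      rewrite !Nat.even_add, Nat.even_even; destruct (Nat.even (S k)); cbn; congruence).
    exact Hpos.
Qed.

Lemma tcoef_abs_le1 n k : Rabs (tcoef n k) <= 1.
Proof.
  destruct (Nat.lt_ge_cases n k) as [Hlt|Hge].
  { rewrite tcoef_lt, Rabs_R0 by lia. lra. }
  destruct n as [|n].
  { replace k with 0%nat by lia. rewrite tcoef_00, Rabs_R1. lra. }
  eapply Rle_trans; [apply tcoef_abs_le; lia|].
  apply (Rdiv_le_1 (INR k) (INR (S n))); [apply lt_0_INR; lia | apply le_INR, Hge].
Qed.

(** * [t(u)^k] as a power series in [u] *)

Lemma tcoef_term_abs_le u n k : 0 <= u -> Rabs (tcoef n k * u^n) <= u^n.
Proof.
  intro Hu. rewrite Rabs_mult, <- RPow_abs, (Rabs_right u) by lra.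
  pose proof (tcoef_abs_le1 n k). pose proof (pow_le u n Hu). pose proof (Rabs_pos (tcoef n k)).
  nra.
Qed.

Lemma ex_series_tcoef_abs u k : 0 <= u < 1 -> ex_series (fun n => Rabs (tcoef n k * u^n)).
Proof.
  intro Hu. apply (@ex_series_le R_AbsRing R_CompleteNormedModule _ (fun n => u^n)).
  - intro n. change (norm (Rabs (tcoef n k * u^n))) with (Rabs (Rabs (tcoef n k * u^n))).
    rewrite Rabs_Rabsolu. apply tcoef_term_abs_le. lra.
  - apply ex_series_geom. rewrite Rabs_right; lra.
Qed.

Lemma ex_series_tcoef u k : 0 <= u < 1 -> ex_series (fun n => tcoef n k * u^n).
Proof. intro Hu. apply ex_series_Rabs, ex_series_tcoef_abs, Hu. Qed.

Lemma Series_tcoef_abs_le u k : 0 <= u < 1 -> Rabs (Series (fun n => tcoef n k * u^n)) <= / (1 - u).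
Proof.
  intro Hu. eapply Rle_trans; [apply Series_Rabs, ex_series_tcoef_abs, Hu|].
  rewrite <- Series_geom by (rewrite Rabs_right; lra).
  apply Series_le; [|apply ex_series_geom; rewrite Rabs_right; lra].
  intro n. split; [apply Rabs_pos | apply tcoef_term_abs_le; lra].
Qed.

Lemma Series_tcoef_0 u : 0 <= u < 1 -> Series (fun n => tcoef n 0 * u^n) = 1.
Proof.
  intro Hu. rewrite Series_incr_1 by (apply ex_series_tcoef, Hu).
  rewrite tcoef_00, (Series_ext _ (fun n => 0 * u^n)) by (intro n; rewrite tcoef_S0; ring).
  rewrite Series_scal_l. simpl. ring.
Qed.

Lemma Series_tcoef_rec u k : 0 <= u < 1 ->
  u * Series (fun n => tcoef n (k + 2) * u^n) =
  u * Series (fun n => tcoef n k * u^n) - 2 * Series (fun n => tcoef n (k + 1) * u^n).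
Proof.
  intro Hu.
  rewrite (Series_incr_1 (fun n => tcoef n (k + 1) * u^n)) by (apply ex_series_tcoef, Hu).
  rewrite tcoef_lt by lia. rewrite Rmult_0_l, Rplus_0_l, <- !Series_scal_l, <- Series_minus.
  - apply Series_ext. intro n. rewrite tcoef_rec. simpl pow. ring.
  - exact (ex_series_scal_l u _ (ex_series_tcoef u k Hu)).
  - exact (ex_series_scal_l 2 _
      (proj1 (ex_series_incr_1 (fun n => tcoef n (k + 1) * u^n)) (ex_series_tcoef u _ Hu))).
Qed.

Lemma Series_tcoef_pow u t k : 0 < u < 1 -> u * t^2 + 2*t - u = 0 -> 0 <= t ->
  Series (fun n => tcoef n k * u^n) = t^k.
Proof.
  intros Hu Ht Ht0.
  assert (Ht1 : t <= 1) by nra.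
  set (d j := Series (fun n => tcoef n j * u^n) - t^j).
  enough (Hd : d k = 0) by (unfold d in Hd; lra).
  apply (recurrence_bounded_zero u (/ (1 - u) + 1)); [lra | intro j | | intro j].
  - unfold d. rewrite !pow_add. apply Rminus_diag_uniq.
    transitivity ((u * Series (fun n => tcoef n (j + 2) * u^n)
      - (u * Series (fun n => tcoef n j * u^n) - 2 * Series (fun n => tcoef n (j + 1) * u^n)))
      - t^j * (u * t^2 + 2*t - u)); [ring|].
    rewrite Series_tcoef_rec, Ht by lra. ring.
  - unfold d. rewrite Series_tcoef_0 by lra. simpl. ring.
  - unfold d. eapply Rle_trans; [apply Rabs_triang|]. rewrite Rabs_Ropp.
    pose proof (Series_tcoef_abs_le u j ltac:(lra)).
    assert (Rabs (t^j) <= 1)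
      by (rewrite <- RPow_abs, Rabs_right, <- (pow1 j) by lra; apply pow_incr; lra).
    lra.
Qed.

Lemma tcoef_partial_sum_error u t k M : 0 < u < 1 -> u * t^2 + 2*t - u = 0 -> 0 <= t ->
  Rabs (t^k - sum_f_R0 (fun n => tcoef n k * u^n) M) <= INR k / INR (S M) * u^(S M) / (1 - u).
Proof.
  intros Hu Ht Ht0.
  rewrite <- (Series_tcoef_pow u t k Hu Ht Ht0).
  rewrite (Series_incr_n _ (S M)) by (lia || apply ex_series_tcoef; lra).
  simpl pred. rewrite Rplus_minus_l.
  assert (Hg : Rabs u < 1) by (rewrite Rabs_right; lra).
  assert (HSM : 0 < INR (S M)) by (apply lt_0_INR; lia).
  set (K := INR k / INR (S M) * u^(S M)).
  eapply Rle_trans.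
  { apply Series_Rabs, (ex_series_incr_n (fun n => Rabs (tcoef n k * u^n)) (S M)),
      ex_series_tcoef_abs. lra. }
  eapply Rle_trans; [apply (Series_le _ (fun j => K * u^j))|].
  - intro j. split; [apply Rabs_pos|]. unfold K.
    rewrite Rabs_mult, <- RPow_abs, (Rabs_right u), pow_add by lra.
    pose proof (tcoef_abs_le (S M + j) k ltac:(lia)).
    assert (INR k / INR (S M + j) <= INR k / INR (S M)).
    { unfold Rdiv. apply Rmult_le_compat_l; [apply pos_INR|].
      apply Rinv_le_contravar; [lra | apply le_INR; lia]. }
    pose proof (pow_le u (S M) ltac:(lra)). pose proof (pow_le u j ltac:(lra)).
    pose proof (Rabs_pos (tcoef (S M + j) k)).
    assert (0 <= u^(S M) * u^j) by nra.
    rewrite Rmult_assoc. apply Rmult_le_compat_r; lra.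
  - exact (ex_series_scal_l K _ (ex_series_geom u Hg)).
  - rewrite Series_scal_l, Series_geom by exact Hg. unfold K, Rdiv. lra.
Qed.

(** * The expansion of [exp (c * t(u))] *)

(* The coefficient of [u^m] in [exp (c * t(u))]. *)
Definition acoef (c : R) (m : nat) : R :=
  sum_f_R0 (fun k => c^k / INR (fact k) * tcoef m k) m.

Lemma acoef_series_swap c u M :
  sum_f_R0 (fun m => acoef c m * u^m) M =
  sum_f_R0 (fun k => c^k / INR (fact k) * sum_f_R0 (fun m => tcoef m k * u^m) M) M.
Proof.
  transitivity (sum_f_R0 (fun m => sum_f_R0 (fun k => c^k / INR (fact k) * tcoef m k * u^m) M) M).
  - apply sum_eq. intros m Hm. unfold acoef. rewrite Rmult_comm, scal_sum.
    rewrite <- (sum_f_R0_extend_zero _ m (M - m)).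
    + replace (m + (M - m))%nat with M by lia. apply sum_eq. intros. ring.
    + intros k Hk. rewrite tcoef_lt by lia. ring.
  - rewrite sum_f_R0_swap. apply sum_eq. intros k _. rewrite scal_sum. apply sum_eq. intros. ring.
Qed.

Lemma exp_expansion_error c u t M : 0 <= c < 1 -> 0 < u < 1 ->
  u * t^2 + 2*t - u = 0 -> 0 <= t ->
  Rabs (exp (c * t) - sum_f_R0 (fun m => acoef c m * u^m) M) <=
  c * exp c * (u^(S M) / (INR (S M) * (1 - u))) + (c * t)^(S M) / (1 - c * t).
Proof.
  intros Hc Hu Ht Ht0.
  assert (Hct : 0 <= c * t < 1) by nra.
  set (P k := sum_f_R0 (fun m => tcoef m k * u^m) M).
  set (Q := u^(S M) / (INR (S M) * (1 - u))).
  assert (HQ : 0 <= Q).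
  { apply Rdiv_le_0_compat; [apply pow_le; lra|].
    apply Rmult_lt_0_compat; [apply lt_0_INR; lia | lra]. }
  rewrite acoef_series_swap.
  change (fun k => c^k / INR (fact k) * sum_f_R0 (fun m => tcoef m k * u^m) M)
    with (fun k => c^k / INR (fact k) * P k).
  replace (exp (c * t) - sum_f_R0 (fun k => c^k / INR (fact k) * P k) M) with
    (sum_f_R0 (fun k => c^k / INR (fact k) * (t^k - P k)) M
     + (exp (c * t) - sum_f_R0 (fun k => (c * t)^k / INR (fact k)) M)).
  2:{ enough (sum_f_R0 (fun k => c^k / INR (fact k) * (t^k - P k)) M =
        sum_f_R0 (fun k => (c * t)^k / INR (fact k)) M
        - sum_f_R0 (fun k => c^k / INR (fact k) * P k) M) by lra.
      rewrite <- minus_sum. apply sum_eq. intros. rewrite Rpow_mult_distr. unfold Rdiv. ring. }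
  eapply Rle_trans; [apply Rabs_triang|]. apply Rplus_le_compat.
  - eapply Rle_trans; [apply sum_f_R0_triangle|].
    eapply Rle_trans; [|apply Rmult_le_compat_r; [exact HQ | apply sum_index_exp_le; lra]].
    rewrite Rmult_comm, scal_sum. apply sum_Rle. intros k _.
    rewrite Rabs_mult, (Rabs_right (c^k / INR (fact k))) by (apply Rle_ge, exp_term_nonneg; lra).
    rewrite Rmult_assoc. apply Rmult_le_compat_l; [apply exp_term_nonneg; lra|].
    eapply Rle_trans; [apply (tcoef_partial_sum_error u t k M Hu Ht Ht0)|].
    right. unfold Q. field. split; [lra | apply not_0_INR; lia].
  - pose proof (exp_partial_sum_le (c * t) M (proj1 Hct)) as Hlow.
    pose proof (exp_sub_partial_sum_le (c * t) M Hct) as Hup.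
    rewrite Rabs_right by lra. exact Hup.
Qed.

Lemma exp_expansion_error_le c u t M : 0 <= c <= 3/4 -> 0 < u <= 1/10 ->
  u * t^2 + 2*t - u = 0 -> 0 <= t -> (4 <= M)%nat ->
  Rabs (exp (c * t) - sum_f_R0 (fun m => acoef c m * u^m) M) <= 48/100 * u^(S M).
Proof.
  intros Hc Hu Ht Ht0 HM.
  eapply Rle_trans; [apply exp_expansion_error; auto; lra|].
  set (U := u^(S M)).
  assert (HU : 0 < U) by (apply pow_lt; lra).
  assert (Htu : t <= u/2) by nra.
  assert (HSM : 5 <= INR (S M)) by (replace 5 with (INR 5) by (simpl; lra); apply le_INR; lia).
  assert (Hexp : 0 <= c * exp c <= 1725/1000).
  { pose proof (exp_le_23_10 c ltac:(lra)). pose proof (exp_pos c). split; nra. }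
  assert (HQ : 0 <= U / (INR (S M) * (1 - u)) <= U * (10/45)).
  { assert (INR (S M) * (1 - u) >= 45/10) by nra.
    split; [apply Rdiv_le_0_compat; lra|]. apply Rle_div_l; nra. }
  assert (Htail : (c * t)^(S M) <= U / 32).
  { assert (Hpow : 32 <= 2^(S M)) by (replace 32 with (2^5) by ring; apply Rle_pow; [lra | lia]).
    apply Rle_trans with ((u/2)^(S M)); [apply pow_incr; nra|].
    unfold Rdiv. rewrite Rpow_mult_distr, pow_inv. apply Rmult_le_compat_l; [lra|].
    apply Rinv_le_contravar; lra. }
  assert (Hinv : / (1 - c * t) <= 2)
    by (replace 2 with (/ (1/2)) by field; apply Rinv_le_contravar; nra).
  assert (Hct : 0 <= (c * t)^(S M)) by (apply pow_le; nra).
  assert (0 <= / (1 - c * t)) by (apply Rlt_le, Rinv_0_lt_compat; nra).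
  (* [1.725 * 10/45 + 2/32 < 0.48] *)
  unfold Rdiv at 2. nra.
Qed.

(* [c] and [s24] stand for [kappa] and [sqrt 24]; kept abstract, they are atoms for [field]. *)
Section BCoefficients.

Variables c s24 : R.
Hypothesis c_sq : c^2 = PI^2 / 18.
Hypothesis s24_sq : s24^2 = 24.
Hypothesis s24_pos : 0 < s24.
Hypothesis c_s24 : c * (24 * sqrt 3) = PI * (2 * s24).

Lemma e1_summand j nu : (1 <= nu <= j)%nat ->
  c^(2*nu) / INR (fact (2*nu)) * tcoef (2*j) (2*nu) / s24^(2*j) =
  INR (fact (2*j - 1)) / (-96)^j *
  ((- PI^2/18)^nu / (INR (fact (2*nu - 1)) * INR (fact (nu + j)) * INR (fact (j - nu)))).
Proof.
  intros Hnu. set (p := (j - nu)%nat).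
  assert (Hj : j = (nu + p)%nat) by (unfold p; lia). clearbody p. subst j.
  destruct nu as [|mu]; [lia|].
  rewrite (pow_mult c 2), c_sq, (pow_mult s24 2), s24_sq.
  set (a := (2*mu + 1)%nat).
  replace (2 * (S mu + p))%nat with (S a + 2*p)%nat by (unfold a; lia).
  replace (2 * S mu)%nat with (S a) by (unfold a; lia).
  rewrite tcoef_shift, (hcoef_S a p (a + 2*p) (a + p)) by lia.
  replace (S a + 2*p - 1)%nat with (a + 2*p)%nat by lia.
  replace (S a - 1)%nat with a by lia.
  replace (S mu + (S mu + p))%nat with (S (a + p)) by (unfold a; lia).
  replace (S mu + p - S mu)%nat with p by lia.
  replace (2^(S (a + 2*p))) with (4^(S mu + p))
    by (replace (S (a + 2*p)) with (2 * (S mu + p))%nat by (unfold a; lia);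
        rewrite pow_mult; f_equal; ring).
  replace (-96) with (-1 * (4 * 24)) by ring.
  replace (- PI^2/18) with (-1 * (PI^2/18)) by field.
  rewrite !Rpow_mult_distr, (pow_add (-1)), fact_simpl, mult_INR.
  pose proof (INR_fact_neq_0 a). pose proof (INR_fact_neq_0 p).
  pose proof (INR_fact_neq_0 (a + 2*p)). pose proof (INR_fact_neq_0 (S (a + p))).
  pose proof (pow_lt 4 (S mu + p) ltac:(lra)). pose proof (pow_lt 24 (S mu + p) ltac:(lra)).
  pose proof (pow_nonzero (-1) (S mu) ltac:(lra)).
  assert (INR (S a) <> 0) by (apply not_0_INR; lia).
  destruct (pow_m1_cases p) as [E|E]; rewrite E; field; lra.
Qed.

Lemma o1_summand j nu : (nu <= j)%nat ->
  c^(2*nu + 1) / INR (fact (2*nu + 1)) * tcoef (2*j + 1) (2*nu + 1) / s24^(2*j + 1) =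
  PI * INR (fact (2*j)) / (24 * sqrt 3 * (-96)^j) *
  ((- PI^2/18)^nu / (INR (fact (2*nu)) * INR (fact (j - nu)) * INR (fact (nu + j + 1)))).
Proof.
  intros Hnu. set (p := (j - nu)%nat).
  assert (Hj : j = (nu + p)%nat) by (unfold p; lia). clearbody p. subst j.
  rewrite (pow_add c), (pow_mult c 2), c_sq, (pow_add s24), (pow_mult s24 2), s24_sq.
  assert (Ec : c = PI * (2 * s24) / (24 * sqrt 3)).
  { pose proof (sqrt_lt_R0 3 ltac:(lra)). rewrite <- c_s24. field. lra. }
  rewrite Ec.
  set (a := (2*nu)%nat).
  replace (2 * (nu + p) + 1)%nat with (S a + 2*p)%nat by (unfold a; lia).
  replace (a + 1)%nat with (S a) by lia.
  rewrite tcoef_shift, (hcoef_S a p (a + 2*p) (a + p)) by lia.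
  replace (2 * (nu + p))%nat with (a + 2*p)%nat by (unfold a; lia).
  replace (nu + (nu + p) + 1)%nat with (S (a + p)) by (unfold a; lia).
  replace (nu + p - nu)%nat with p by lia.
  replace (2^(S (a + 2*p))) with (2 * 4^(nu + p))
    by (replace (S (a + 2*p)) with (S (2 * (nu + p))) by (unfold a; lia);
        rewrite <- tech_pow_Rmult, pow_mult; do 2 f_equal; ring).
  replace (-96) with (-1 * (4 * 24)) by ring.
  replace (- PI^2/18) with (-1 * (PI^2/18)) by field.
  rewrite !Rpow_mult_distr, (pow_add (-1)), fact_simpl, mult_INR.
  pose proof (INR_fact_neq_0 a). pose proof (INR_fact_neq_0 p).
  pose proof (INR_fact_neq_0 (a + 2*p)). pose proof (INR_fact_neq_0 (S (a + p))).
  pose proof (pow_lt 4 (nu + p) ltac:(lra)). pose proof (pow_lt 24 (nu + p) ltac:(lra)).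
  pose proof (pow_nonzero (-1) nu ltac:(lra)).
  assert (INR (S a) <> 0) by (apply not_0_INR; lia).
  pose proof (sqrt_lt_R0 3 ltac:(lra)).
  destruct (pow_m1_cases p) as [E|E]; rewrite E; field; lra.
Qed.

Lemma b_eq_acoef m : b m = acoef c m / s24^m.
Proof.
  unfold acoef. rewrite sum_f_R0_div.
  destruct (Nat.Even_or_Odd m) as [[j ->]|[j ->]]; unfold b.
  - rewrite Nat.even_even, Nat.div2_double.
    rewrite sum_f_R0_even
      by (intro i; rewrite tcoef_parity by (rewrite Nat.even_even, Nat.even_odd; discriminate);
          lra).
    destruct j as [|j]; [simpl; rewrite tcoef_00; field|].
    rewrite decomp_sum, Nat.pred_succ by lia.
    replace (tcoef (2 * S j) (2 * 0)) with 0
      by (symmetry; replace (2 * S j)%nat with (S (S (2*j))) by lia; apply tcoef_S0).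
    rewrite Rmult_0_r, Rdiv_0_l, Rplus_0_l.
    unfold e1, sum_range. simpl Nat.leb. rewrite Rmult_1_r, scal_sum.
    replace (S j - 1)%nat with j by lia.
    apply sum_eq. intros i Hi. rewrite e1_summand by lia. simpl (1 + i)%nat. ring.
  - rewrite Nat.even_odd, Nat.div2_odd'.
    rewrite sum_f_R0_odd
      by (intro i; rewrite tcoef_parity by (rewrite Nat.even_even, Nat.even_odd; discriminate);
          lra).
    unfold o1, sum_range. rewrite Nat.sub_0_r, Rmult_1_r, scal_sum.
    apply sum_eq. intros i Hi. rewrite o1_summand by lia. simpl (0 + i)%nat. ring.
Qed.

End BCoefficients.

(* The exponents of the theorem are [kappa * sqrt (24 n + 1)] and [kappa * sqrt (24 n)]. *)
Definition kappa : R := PI / (3 * sqrt 2).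

Lemma kappa_sq : kappa^2 = PI^2 / 18.
Proof.
  unfold kappa. pose proof sqrt2_ge.
  assert (Hs2 : sqrt 2 ^ 2 = 2) by (apply pow2_sqrt; lra).
  unfold Rdiv. rewrite Rpow_mult_distr, pow_inv, Rpow_mult_distr, Hs2. field.
Qed.

Lemma sqrt_24 : sqrt 24 = 2 * sqrt 2 * sqrt 3.
Proof.
  replace 24 with ((2 * 2) * (2 * 3)) by ring.
  rewrite sqrt_mult, (sqrt_mult 2 3), sqrt_square by lra. ring.
Qed.

Lemma kappa_mul_sqrt : kappa * (24 * sqrt 3) = PI * (2 * sqrt 24).
Proof.
  unfold kappa. rewrite sqrt_24. pose proof sqrt2_ge.
  replace (24 * sqrt 3) with (4 * (sqrt 2 * sqrt 2) * 3 * sqrt 3)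
    by (rewrite sqrt_sqrt by lra; ring).
  field. lra.
Qed.

Lemma kappa_bounds : 0 <= kappa <= 3/4.
Proof.
  unfold kappa. pose proof sqrt2_ge. pose proof PI_le_315. pose proof PI_RGT_0.
  split; [apply Rdiv_le_0_compat; lra|].
  apply Rle_div_l; lra.
Qed.

Lemma sqrt_gap_root y : 0 < y ->
  / sqrt y * (sqrt (y + 1) - sqrt y)^2 + 2 * (sqrt (y + 1) - sqrt y) - / sqrt y = 0.
Proof.
  intro Hy. pose proof (sqrt_lt_R0 y Hy).
  replace (/ sqrt y * (sqrt (y + 1) - sqrt y)^2 + 2 * (sqrt (y + 1) - sqrt y) - / sqrt y)
    with ((sqrt (y + 1) * sqrt (y + 1) - sqrt y * sqrt y - 1) / sqrt y) by (field; lra).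
  rewrite !sqrt_sqrt by lra. unfold Rdiv. ring.
Qed.

Lemma exponent_split x : 0 <= x ->
  PI * sqrt (24 * x + 1) / (3 * sqrt 2) =
  2 * PI * sqrt (x / 3) + kappa * (sqrt (24 * x + 1) - sqrt (24 * x)).
Proof.
  intro Hx. pose proof sqrt2_ge.
  assert (Hs : sqrt (24 * x) = 6 * sqrt 2 * sqrt (x / 3)).
  { replace (24 * x) with ((6 * 6) * (2 * (x / 3))) by field.
    rewrite sqrt_mult, (sqrt_mult 2), sqrt_square by lra. ring. }
  rewrite Hs. unfold kappa. field. lra.
Qed.

Lemma sum_range_b_eq x M : 0 < x ->
  sum_range 0 M (fun m => b m / Rpower x (INR m / 2)) =
  sum_f_R0 (fun m => acoef kappa m * (/ sqrt (24 * x))^m) M.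
Proof.
  intro Hx. unfold sum_range. rewrite Nat.sub_0_r, Rmult_1_r.
  pose proof (sqrt_lt_R0 x Hx). pose proof (sqrt_lt_R0 24 ltac:(lra)).
  apply sum_eq. intros m _. simpl (0 + m)%nat.
  rewrite (b_eq_acoef kappa (sqrt 24) kappa_sq), Rpower_half, sqrt_mult, pow_inv, Rpow_mult_distr
    by (lra || apply pow2_sqrt || apply kappa_mul_sqrt; lra).
  field. split; apply pow_nonzero; lra.
Qed.

Lemma error_bound_eq x N : 0 < x ->
  (2 / 100) / Rpower 24 (INR N / 2) * Rpower x (- (INR N + 2) / 2) =
  48/100 * (/ sqrt (24 * x))^(N + 2).
Proof.
  intro Hx. pose proof (sqrt_lt_R0 x Hx). pose proof (sqrt_lt_R0 24 ltac:(lra)).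
  replace (- (INR N + 2) / 2) with (- (INR (N + 2) / 2)) by (rewrite plus_INR; simpl; field).
  rewrite Rpower_Ropp, !Rpower_half, sqrt_mult, pow_inv, Rpow_mult_distr, (pow_add (sqrt 24)),
    pow2_sqrt by lra.
  field. split; apply pow_nonzero; lra.
Qed.

Lemma nN_ge_256 N : 256 <= nN N.
Proof.
  unfold nN. pose proof (pos_INR N).
  assert (HL : 1 <= ln (6 * INR N + 8)).
  { rewrite <- (ln_exp 1).
    apply Rlt_le, ln_increasing; [apply exp_pos | pose proof exp_le_3; lra]. }
  replace 256 with (4^4) by ring. apply pow_incr. split; [lra|].
  apply Rle_div_l; [simpl; lra|]. simpl. nra.
Qed.

Theorem lemma3p12 (N n : nat) :
  (3 <= N)%nat -> nN N <= INR n ->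
  exists E : R,
    Rabs E <= (2 / 100) / Rpower 24 (INR N / 2) * Rpower (INR n) (- (INR N + 2) / 2) /\
    exp (PI * sqrt (24 * INR n + 1) / (3 * sqrt 2)) =
    exp (2 * PI * sqrt (INR n / 3)) *
      (sum_range 0 (N + 1) (fun m => b m / Rpower (INR n) (INR m / 2)) + E).
Proof.
  intros HN Hn. pose proof (nN_ge_256 N) as H256.
  assert (Hy : 100 <= 24 * INR n) by lra.
  rewrite error_bound_eq, sum_range_b_eq, exponent_split, exp_plus by lra.
  replace (N + 2)%nat with (S (N + 1)) by lia.
  set (u := / sqrt (24 * INR n)). set (t := sqrt (24 * INR n + 1) - sqrt (24 * INR n)).
  exists (exp (kappa * t) - sum_f_R0 (fun m => acoef kappa m * u^m) (N + 1)).
  split; [|ring].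
  apply exp_expansion_error_le; [apply kappa_bounds | | apply sqrt_gap_root; lra | | lia].
  - assert (10 <= sqrt (24 * INR n))
      by (rewrite <- (sqrt_square 10) by lra; apply sqrt_le_1_alt; lra).
    split; [apply Rinv_0_lt_compat; lra|].
    replace (1/10) with (/ 10) by field. apply Rinv_le_contravar; lra.
  - pose proof (sqrt_le_1_alt (24 * INR n) (24 * INR n + 1) ltac:(lra)). unfold t. lra.
Qed.
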